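(* Assume the Continuum Hypothesis. Let $G$ be an uncountable abelian Polish group. Then there exists a set $X\subseteq G$ such that both $X$ and $G\setminus X$ are naively Haar meager. In particular, the naively Haar meager subsets of $G$ do not form an ideal.
   Context: Let $G$ be a Polish group. A set $X\subseteq G$ is called naively Haar meager if there are a compact metrizable space $K$ and a continuous map $f\colon K\to G$ such that $f^{-1}(gXh)$ is meager in $K$ for every $g,h\in G$. *)

From Stdlib Require Import Reals List.
Open Scope R_scope.

Definition is_metric {X : Type} (d : X -> X -> R) : Prop :=
  (forall x y, 0 <= d x y) /\
  (forall x y, d x y = 0 <-> x = y) /\
  (forall x y, d x y = d y x) /\
  (forall x y z, d x z <= d x y + d y z).

Definition open_set {X : Type} (d : X -> X -> R) (U : X -> Prop) : Prop :=
  forall x, U x -> exists eps, 0 < eps /\ forall y, d x y < eps -> U y.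

Definition closure {X : Type} (d : X -> X -> R) (A : X -> Prop) : X -> Prop :=
  fun x => forall eps, 0 < eps -> exists y, A y /\ d x y < eps.

Definition nowhere_dense {X : Type} (d : X -> X -> R) (A : X -> Prop) : Prop :=
  ~ exists (U : X -> Prop), open_set d U /\ (exists x, U x) /\
      (forall x, U x -> closure d A x).

Definition meager {X : Type} (d : X -> X -> R) (A : X -> Prop) : Prop :=
  exists An : nat -> X -> Prop,
    (forall n, nowhere_dense d (An n)) /\
    (forall x, A x -> exists n, An n x).

Definition compact_space {X : Type} (d : X -> X -> R) : Prop :=
  forall (I : Type) (U : I -> X -> Prop),
    (forall i, open_set d (U i)) -> (forall x, exists i, U i x) ->
    exists l : list I, forall x, exists i, In i l /\ U i x.

Definition continuous_map {X Y : Type} (dX : X -> X -> R) (dY : Y -> Y -> R)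
  (f : X -> Y) : Prop :=
  forall x eps, 0 < eps -> exists delta, 0 < delta /\
    forall x', dX x x' < delta -> dY (f x) (f x') < eps.

Definition cauchy_seq {X : Type} (d : X -> X -> R) (u : nat -> X) : Prop :=
  forall eps, 0 < eps -> exists N, forall m n, (N <= m)%nat -> (N <= n)%nat ->
    d (u m) (u n) < eps.

Definition complete_metric {X : Type} (d : X -> X -> R) : Prop :=
  forall u, cauchy_seq d u -> exists l, forall eps, 0 < eps ->
    exists N, forall n, (N <= n)%nat -> d (u n) l < eps.

Definition separable_metric {X : Type} (d : X -> X -> R) : Prop :=
  exists s : nat -> X, forall x eps, 0 < eps -> exists n, d x (s n) < eps.

Definition polish_group {G : Type} (mul : G -> G -> G) (inv : G -> G) (e : G)
  (d : G -> G -> R) : Prop :=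
  (forall x y z, mul x (mul y z) = mul (mul x y) z) /\
  (forall x, mul e x = x /\ mul x e = x) /\
  (forall x, mul (inv x) x = e /\ mul x (inv x) = e) /\
  is_metric d /\ complete_metric d /\ separable_metric d /\
  (forall x y eps, 0 < eps -> exists delta, 0 < delta /\
     forall x' y', d x x' < delta -> d y y' < delta ->
       d (mul x y) (mul x' y') < eps) /\
  continuous_map d d inv.

Definition abelian {G : Type} (mul : G -> G -> G) : Prop :=
  forall x y, mul x y = mul y x.

Definition uncountable (T : Type) : Prop :=
  ~ exists f : T -> nat, forall x y, f x = f y -> x = y.

Definition translate2 {G : Type} (mul : G -> G -> G) (g h : G) (X : G -> Prop)
  : G -> Prop :=
  fun y => exists x, X x /\ y = mul (mul g x) h.

Definition naively_haar_meager {G : Type} (mul : G -> G -> G)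
  (d : G -> G -> R) (X : G -> Prop) : Prop :=
  exists (K : Type) (dK : K -> K -> R) (f : K -> G),
    is_metric dK /\ compact_space dK /\ (exists k : K, True) /\
    continuous_map dK d f /\
    forall g h, meager dK (fun k => translate2 mul g h X (f k)).

Definition CH : Prop :=
  forall A : R -> Prop,
    (exists f : {x : R | A x} -> nat, forall a b, f a = f b -> a = b) \/
    (exists f : R -> {x : R | A x},
       (forall a b, f a = f b -> a = b) /\ (forall y, exists a, f a = y)).

From Stdlib Require Import Reals Lra Lia List Arith Wf_nat.
From Stdlib Require Import Classical ClassicalEpsilon FunctionalExtensionality ProofIrrelevance.
From Stdlib Require Cantor.
From HB Require Import structures.
From mathcomp Require boolp wochoice.
Open Scope R_scope.

(* Under CH the group G carries a linear order all of whose initial segments are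
   countable.  Inside G sits a Cantor set C = F(2^N) which is Sidon: x1 + x2 = x3 + x4
   has no solution in four distinct points of C.  Split C into its halves C0 and C1 and
   let X be the set of points of the translates b + C1 that lie in no a + C0 with a <= b.
   For every t, the set X meets t + C0 only inside the union of the b + C1 with b < t,
   and t + C1 lies in X outside the union of the a + C0 with a <= t.  A translate of one
   half meets a translate of the other in at most one point (Sidon), so both traces are
   countable subsets of the perfect space 2^N, hence meager.  Finally, G = X u (G \ X)
   is not naively Haar meager by the Baire category theorem. *)

(** * The Cantor space *)

Lemma pow2_pos n : 0 < 2 ^ n.
Proof. apply pow_lt; lra. Qed.

Lemma inv_pow2_pos n : 0 < / 2 ^ n.
Proof. apply Rinv_0_lt_compat, pow2_pos. Qed.

Lemma inv_pow2_le n m : (n <= m)%nat -> / 2 ^ m <= / 2 ^ n.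
Proof. intros H. apply Rinv_le_contravar; [apply pow2_pos | apply Rle_pow; [lra | exact H]]. Qed.

Lemma inv_pow2_lt n m : (n < m)%nat -> / 2 ^ m < / 2 ^ n.
Proof.
  intros H. apply Rinv_lt_contravar; [apply Rmult_lt_0_compat; apply pow2_pos |].
  apply Rlt_pow; [lra | exact H].
Qed.

Lemma exists_inv_pow2_lt eps : 0 < eps -> exists n, / 2 ^ n < eps.
Proof.
  intros Heps.
  destruct (pow_lt_1_zero (/ 2) ltac:(rewrite Rabs_pos_eq; lra) eps Heps) as [n Hn].
  exists n. specialize (Hn n (le_n n)).
  rewrite Rabs_pos_eq, pow_inv in Hn; [exact Hn | apply pow_le; lra].
Qed.

Definition cantor : Type := nat -> bool.

Definition agree (n : nat) (a b : cantor) : Prop := forall k, (k < n)%nat -> a k = b k.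

Lemma agree_sym n a b : agree n a b -> agree n b a.
Proof. intros H k Hk. symmetry; auto. Qed.

Lemma agree_le n m a b : (m <= n)%nat -> agree n a b -> agree m a b.
Proof. intros L H k Hk. apply H. lia. Qed.

Lemma exists_first_diff (a b : cantor) : a <> b -> exists m, a m <> b m /\ agree m a b.
Proof.
  intros Hab.
  assert (Hex : exists k, a k <> b k).
  { apply not_all_ex_not. intros Hall. apply Hab, functional_extensionality, Hall. }
  destruct (dec_inh_nat_subset_has_unique_least_element _ (fun k => classic (a k <> b k)) Hex)
    as [m [[Hm Hmin] _]].
  exists m. split; [exact Hm |].
  intros k Hk. apply NNPP. intros Hne. specialize (Hmin k Hne). lia.
Qed.

Definition first_diff (a b : cantor) : nat :=
  epsilon (inhabits 0%nat) (fun m => a m <> b m /\ agree m a b).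

Lemma first_diff_spec a b :
  a <> b -> a (first_diff a b) <> b (first_diff a b) /\ agree (first_diff a b) a b.
Proof. intros H. unfold first_diff. apply epsilon_spec, exists_first_diff, H. Qed.

Lemma first_diff_le a b k : a k <> b k -> (first_diff a b <= k)%nat.
Proof.
  intros Hk. assert (Hab : a <> b) by (intros ->; auto).
  destruct (first_diff_spec a b Hab) as [_ Hagree].
  destruct (le_lt_dec (first_diff a b) k) as [L | L]; [exact L |].
  exfalso. apply Hk, Hagree, L.
Qed.

Lemma first_diff_sym a b : a <> b -> first_diff b a = first_diff a b.
Proof.
  intros Hab. assert (Hba : b <> a) by auto.
  destruct (first_diff_spec a b Hab) as [Hab1 _]. destruct (first_diff_spec b a Hba) as [Hba1 _].
  pose proof (first_diff_le a b _ (not_eq_sym Hba1)).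
  pose proof (first_diff_le b a _ (not_eq_sym Hab1)).
  lia.
Qed.

Definition dcantor (a b : cantor) : R :=
  if excluded_middle_informative (a = b) then 0 else / 2 ^ first_diff a b.

Lemma dcantor_nonneg a b : 0 <= dcantor a b.
Proof.
  unfold dcantor. destruct (excluded_middle_informative (a = b)); [lra | left; apply inv_pow2_pos].
Qed.

Lemma dcantor_le_iff a b n : dcantor a b <= / 2 ^ n <-> agree n a b.
Proof.
  unfold dcantor. destruct (excluded_middle_informative (a = b)) as [-> | Hab].
  - split; [intros _ k _; reflexivity | intros _; left; apply inv_pow2_pos].
  - destruct (first_diff_spec a b Hab) as [Hdiff Hagree]. split; intros H.
    + destruct (le_lt_dec n (first_diff a b)) as [L | L].
      * exact (agree_le _ _ _ _ L Hagree).
      * pose proof (inv_pow2_lt _ _ L). lra.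
    + apply inv_pow2_le. destruct (le_lt_dec n (first_diff a b)) as [L | L]; [exact L |].
      exfalso. apply Hdiff, H, L.
Qed.

Lemma dcantor_lt_agree a b n : dcantor a b < / 2 ^ n -> agree (S n) a b.
Proof.
  unfold dcantor. destruct (excluded_middle_informative (a = b)) as [-> | Hab].
  - intros _ k _. reflexivity.
  - destruct (first_diff_spec a b Hab) as [_ Hagree]. intros H.
    destruct (le_lt_dec (first_diff a b) n) as [L | L].
    + pose proof (inv_pow2_le _ _ L). lra.
    + exact (agree_le _ _ _ _ L Hagree).
Qed.

Lemma dcantor_ge (a b : cantor) k : a k <> b k -> / 2 ^ k <= dcantor a b.
Proof.
  intros Hk. unfold dcantor. destruct (excluded_middle_informative (a = b)) as [E | _].
  - subst. contradiction.
  - apply inv_pow2_le, first_diff_le, Hk.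
Qed.

Lemma dcantor_metric : is_metric dcantor.
Proof.
  split; [exact dcantor_nonneg | split; [| split]].
  - intros a b. unfold dcantor. destruct (excluded_middle_informative (a = b)) as [E | E].
    + tauto.
    + pose proof (inv_pow2_pos (first_diff a b)). split; [lra | contradiction].
  - intros a b. unfold dcantor.
    destruct (excluded_middle_informative (a = b)) as [E | E];
      destruct (excluded_middle_informative (b = a)) as [E' | E']; subst; try tauto.
    rewrite first_diff_sym; auto.
  - intros a b c. pose proof (dcantor_nonneg a b). pose proof (dcantor_nonneg b c).
    unfold dcantor at 1. destruct (excluded_middle_informative (a = c)) as [E | Hac]; [lra |].
    destruct (first_diff_spec a c Hac) as [Hm _]. set (m := first_diff a c) in *.
    destruct (Bool.bool_dec (a m) (b m)) as [Eab | Nab].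
    + assert (Nbc : b m <> c m) by congruence. pose proof (dcantor_ge b c m Nbc). lra.
    + pose proof (dcantor_ge a b m Nab). lra.
Qed.

Definition set_bit (a : cantor) (n : nat) (v : bool) : cantor :=
  fun k => if Nat.eqb k n then v else a k.

Lemma agree_set_bit n a v x : agree n x a -> x n = v -> agree (S n) x (set_bit a n v).
Proof.
  intros Ha Hv k Hk. unfold set_bit. destruct (Nat.eqb_spec k n) as [-> | Hkn]; [exact Hv |].
  apply Ha. lia.
Qed.

Section CantorCompact.
Variables (I : Type) (U : I -> cantor -> Prop).

Definition cylinder_covered (n : nat) (a : cantor) : Prop :=
  exists l : list I, forall x, agree n x a -> exists i, In i l /\ U i x.

Lemma cylinder_covered_split n a :
  cylinder_covered (S n) (set_bit a n false) -> cylinder_covered (S n) (set_bit a n true) ->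
  cylinder_covered n a.
Proof.
  intros [l0 H0] [l1 H1]. exists (l0 ++ l1). intros x Hx.
  destruct (x n) eqn:Hxn;
    [destruct (H1 x) as [i [Hi Ui]] | destruct (H0 x) as [i [Hi Ui]]];
    try (apply agree_set_bit; assumption);
    exists i; split; auto; apply in_or_app; auto.
Qed.

(* König's lemma: always descend into a half that is not finitely covered. *)
Fixpoint uncovered_branch (n : nat) : cantor :=
  match n with
  | O => fun _ => false
  | S n => let a := uncovered_branch n in
      if excluded_middle_informative (cylinder_covered (S n) (set_bit a n false))
      then set_bit a n true else set_bit a n false
  end.

Lemma uncovered_branch_spec :
  ~ cylinder_covered 0 (uncovered_branch 0) -> forall n, ~ cylinder_covered n (uncovered_branch n).
Proof.
  intros H0. induction n as [| n IH]; [exact H0 |]. simpl.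
  destruct (excluded_middle_informative (cylinder_covered (S n) (set_bit (uncovered_branch n) n false)))
    as [Hc | Hc]; [| exact Hc].
  intros Hc'. apply IH, cylinder_covered_split; assumption.
Qed.

Lemma uncovered_branch_stable n k : (k < n)%nat -> uncovered_branch n k = uncovered_branch (S k) k.
Proof.
  induction n as [| n IH]; intros Hk; [lia |]. simpl uncovered_branch at 1.
  assert (E : forall a v, set_bit a n v k = if Nat.eqb k n then v else a k) by reflexivity.
  destruct (Nat.eqb_spec k n) as [-> | Hkn]; [reflexivity |].
  destruct (excluded_middle_informative _); rewrite E; destruct (Nat.eqb_spec k n);
    try contradiction; apply IH; lia.
Qed.

End CantorCompact.

Lemma cantor_compact : compact_space dcantor.
Proof.
  intros I U HU Hcov. apply NNPP. intros Hno.
  assert (H0 : ~ cylinder_covered I U 0 (uncovered_branch I U 0)).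
  { intros [l Hl]. apply Hno. exists l. intros x. apply Hl. intros k Hk. lia. }
  set (a := fun k => uncovered_branch I U (S k) k).
  destruct (Hcov a) as [i Ui]. destruct (HU i a Ui) as [eps [Heps Hball]].
  destruct (exists_inv_pow2_lt eps Heps) as [n Hn].
  apply (uncovered_branch_spec I U H0 n). exists (i :: nil). intros x Hx.
  exists i. split; [left; reflexivity |]. apply Hball.
  apply Rle_lt_trans with (/ 2 ^ n); [| exact Hn]. apply dcantor_le_iff.
  intros k Hk. rewrite Hx by exact Hk. symmetry. apply uncovered_branch_stable, Hk.
Qed.

Definition subsingleton {T : Type} (S : T -> Prop) : Prop := forall x y, S x -> S y -> x = y.

Lemma subsingleton_nowhere_dense (S : cantor -> Prop) : subsingleton S -> nowhere_dense dcantor S.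
Proof.
  intros Hs [V [HV [[x0 Vx0] Hcl]]].
  destruct (HV x0 Vx0) as [eps [Heps Hball]].
  destruct dcantor_metric as [_ [Hzero _]].
  assert (Hnear : forall z y, dcantor x0 z < eps -> S y -> z = y).
  { intros z y Hz Sy. apply Hzero. apply Rle_antisym; [| apply dcantor_nonneg].
    apply Rnot_lt_le. intros Hlt.
    destruct (Hcl z (Hball z Hz) (dcantor z y) Hlt) as [y' [Sy' Hy']].
    rewrite (Hs y' y Sy' Sy) in Hy'. lra. }
  destruct (Hcl x0 Vx0 1 ltac:(lra)) as [y0 [Sy0 _]].
  destruct (exists_inv_pow2_lt eps Heps) as [n Hn].
  set (z := set_bit x0 n (negb (x0 n))).
  assert (Ez : z = x0).
  { rewrite (Hnear z y0), (Hnear x0 y0); auto.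
    - rewrite (proj2 (Hzero x0 x0) eq_refl). exact Heps.
    - apply Rle_lt_trans with (/ 2 ^ n); [| exact Hn]. apply dcantor_le_iff.
      intros k Hk. unfold z, set_bit. destruct (Nat.eqb_spec k n); [lia | reflexivity]. }
  assert (Hzn : z n = x0 n) by (rewrite Ez; reflexivity).
  unfold z, set_bit in Hzn. rewrite Nat.eqb_refl in Hzn. destruct (x0 n); discriminate.
Qed.

Definition cons_bit (v : bool) (a : cantor) : cantor :=
  fun k => match k with O => v | S k => a k end.

Lemma cons_bit_inj v a b : cons_bit v a = cons_bit v b -> a = b.
Proof. intros E. apply functional_extensionality. intros k. exact (f_equal (fun f => f (S k)) E). Qed.

Lemma cons_bit_neq v w a b : v <> w -> cons_bit v a <> cons_bit w b.
Proof. intros H E. apply H. exact (f_equal (fun f => f O) E). Qed.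

Lemma continuous_cons_bit {Y : Type} (dY : Y -> Y -> R) (F : cantor -> Y) v :
  continuous_map dcantor dY F -> continuous_map dcantor dY (fun a => F (cons_bit v a)).
Proof.
  intros HF x eps Heps. destruct (HF (cons_bit v x) eps Heps) as [delta [Hdelta HFx]].
  destruct (exists_inv_pow2_lt delta Hdelta) as [n Hn].
  exists (/ 2 ^ n). split; [apply inv_pow2_pos |]. intros x' Hx'.
  apply HFx. apply dcantor_lt_agree in Hx'.
  assert (Hagree : agree (S n) (cons_bit v x) (cons_bit v x')).
  { intros [| k] Hk; [reflexivity | apply Hx'; lia]. }
  apply dcantor_le_iff in Hagree. pose proof (inv_pow2_lt n (S n) ltac:(lia)). lra.
Qed.

(** * Baire category *)

Lemma list_nat_bounded (l : list nat) : exists N, forall i, In i l -> (i <= N)%nat.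
Proof.
  induction l as [| a l [N HN]]; [exists 0%nat; intros i [] |].
  exists (Nat.max a N). intros i [-> | Hi]; [lia | specialize (HN i Hi); lia].
Qed.

Section MetricSpace.
Variables (X : Type) (d : X -> X -> R).
Hypothesis Hd : is_metric d.

Lemma metric_refl x : d x x = 0.
Proof. apply (proj1 (proj2 Hd)). reflexivity. Qed.

Lemma metric_tri x y z : d x z <= d x y + d y z.
Proof. apply Hd. Qed.

Lemma metric_sym x y : d x y = d y x.
Proof. apply Hd. Qed.

Lemma metric_pos x y : x <> y -> 0 < d x y.
Proof.
  intros Hxy. destruct Hd as [Hnn [Hzero _]].
  destruct (Hnn x y) as [H | H]; [exact H | exfalso; apply Hxy, Hzero; auto].
Qed.

Lemma ball_avoiding_nowhere_dense (A : X -> Prop) c r : nowhere_dense d A -> 0 < r ->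
  exists c' r', 0 < r' /\ forall y, d c' y <= r' -> d c y < r /\ ~ A y.
Proof.
  intros HA Hr.
  assert (exists x, d c x < r /\ ~ closure d A x) as [x [Hx Hncl]].
  { apply NNPP. intros H. apply HA. exists (fun y => d c y < r). split; [| split].
    - intros y Hy. exists (r - d c y). split; [lra |]. intros z Hz.
      pose proof (metric_tri c y z). lra.
    - exists c. rewrite metric_refl. exact Hr.
    - intros y Hy. apply NNPP. intros Hn. apply H. exists y. auto. }
  assert (exists eps, 0 < eps /\ forall y, A y -> eps <= d x y) as [eps [Heps Hfar]].
  { apply NNPP. intros H. apply Hncl. intros eps Heps. apply NNPP. intros H2.
    apply H. exists eps. split; [exact Heps |]. intros y Ay. apply Rnot_lt_le. intros Hy.
    apply H2. eauto. }
  set (r' := Rmin eps (r - d c x) / 2).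
  assert (0 < Rmin eps (r - d c x)) by (apply Rmin_glb_lt; lra).
  pose proof (Rmin_l eps (r - d c x)). pose proof (Rmin_r eps (r - d c x)).
  exists x, r'. split; [unfold r'; lra |]. intros y Hy. unfold r' in Hy. split.
  - pose proof (metric_tri c x y). lra.
  - intros Ay. pose proof (Hfar y Ay). lra.
Qed.

Lemma compact_nested_balls (c : nat -> X) (r : nat -> R) : compact_space d ->
  (forall n, 0 <= r n) ->
  (forall n y, d (c (S n)) y <= r (S n) -> d (c n) y <= r n) ->
  exists y, forall n, d (c n) y <= r n.
Proof.
  intros Hc Hr Hnest.
  assert (Hmono : forall n m y, (n <= m)%nat -> d (c m) y <= r m -> d (c n) y <= r n).
  { intros n m y L. induction L; auto. }
  apply NNPP. intros Hno.
  destruct (Hc nat (fun n y => r n < d (c n) y)) as [l Hl].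
  - intros n y Hy. exists (d (c n) y - r n). split; [lra |]. intros z Hz.
    pose proof (metric_tri (c n) z y). rewrite (metric_sym z y) in *. lra.
  - intros y. apply NNPP. intros Hy. apply Hno. exists y. intros n.
    apply Rnot_lt_le. intros Hn. apply Hy. eauto.
  - destruct (list_nat_bounded l) as [N HN]. destruct (Hl (c N)) as [i [Hi Hci]].
    pose proof (Hmono i N (c N) (HN i Hi)). rewrite metric_refl in *. specialize (Hr N). lra.
Qed.

Theorem compact_not_meager : compact_space d -> (exists x : X, True) -> ~ meager d (fun _ => True).
Proof.
  intros Hc [x0 _] [A [HA Hcov]].
  assert (Hstep : forall n (p : X * R), exists q : X * R, 0 < snd p -> 0 < snd q /\
      forall y, d (fst q) y <= snd q -> d (fst p) y < snd p /\ ~ A n y).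
  { intros n [c r]. destruct (Rlt_dec 0 r) as [Hr | Hr].
    - destruct (ball_avoiding_nowhere_dense (A n) c r (HA n) Hr) as [c' [r' H]].
      exists (c', r'). auto.
    - exists (c, r). simpl. lra. }
  set (step n p := proj1_sig (constructive_indefinite_description _ (Hstep n p))).
  assert (Hst : forall n p, 0 < snd p -> 0 < snd (step n p) /\
      forall y, d (fst (step n p)) y <= snd (step n p) -> d (fst p) y < snd p /\ ~ A n y).
  { intros n p. apply (proj2_sig (constructive_indefinite_description _ (Hstep n p))). }
  set (ball := fix ball n : X * R := match n with O => (x0, 1) | S n => step n (ball n) end).
  assert (Hpos : forall n, 0 < snd (ball n)).
  { induction n; [simpl; lra | apply Hst, IHn]. }
  destruct (compact_nested_balls (fun n => fst (ball n)) (fun n => snd (ball n)) Hc)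
    as [y Hy].
  - intros n. left. apply Hpos.
  - intros n y Hy. apply Rlt_le, (proj2 (Hst n (ball n) (Hpos n))), Hy.
  - destruct (Hcov y I) as [n Hn]. apply (proj2 (Hst n (ball n) (Hpos n)) y (Hy (S n))), Hn.
Qed.

End MetricSpace.

(** * Countable sets and cardinality *)

Definition countable_set {T : Type} (A : T -> Prop) : Prop :=
  exists f : T -> nat, forall x y, A x -> A y -> f x = f y -> x = y.

Lemma countable_set_preimage {S T : Type} (g : S -> T) (A : T -> Prop) :
  (forall x y, g x = g y -> x = y) -> countable_set A -> countable_set (fun x => A (g x)).
Proof.
  intros Hg [f Hf]. exists (fun x => f (g x)). intros x y Ax Ay E. apply Hg, Hf; assumption.
Qed.

Lemma countable_set_add {T : Type} (A : T -> Prop) (z : T) :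
  countable_set A -> countable_set (fun x => A x \/ x = z).
Proof.
  intros [f Hf].
  exists (fun x => if excluded_middle_informative (x = z) then 0%nat else S (f x)).
  intros x y Hx Hy.
  destruct (excluded_middle_informative (x = z)), (excluded_middle_informative (y = z));
    intros E; try congruence.
  apply Hf; [destruct Hx | destruct Hy | injection E]; tauto.
Qed.

Lemma meager_countable_union_subsingletons {I : Type} (P : I -> Prop) (S : I -> cantor -> Prop)
  (A : cantor -> Prop) : countable_set P -> (forall i, subsingleton (S i)) ->
  (forall k, A k -> exists i, P i /\ S i k) -> meager dcantor A.
Proof.
  intros [f Hf] HS HA. exists (fun n k => exists i, P i /\ f i = n /\ S i k). split.
  - intros n. apply subsingleton_nowhere_dense.
    intros k1 k2 [i1 [Hi1 [<- S1]]] [i2 [Hi2 [E S2]]].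
    rewrite (Hf i2 i1 Hi2 Hi1 E) in S2. exact (HS i1 k1 k2 S1 S2).
  - intros k Hk. destruct (HA k Hk) as [i [Hi Si]]. eauto.
Qed.

Fixpoint ternary_sum (b : cantor) (m j : nat) : R :=
  match j with
  | O => 0
  | S j => (if b m then / 3 ^ S m else 0) + ternary_sum b (S m) j
  end.

Lemma inv_pow3_pos n : 0 < / 3 ^ n.
Proof. apply Rinv_0_lt_compat, pow_lt. lra. Qed.

Lemma ternary_sum_nonneg b m j : 0 <= ternary_sum b m j.
Proof.
  revert m. induction j as [| j IH]; intros m; simpl; [lra |].
  specialize (IH (S m)). pose proof (inv_pow3_pos (S m)). destruct (b m); simpl in *; lra.
Qed.

Lemma ternary_sum_le b m j : ternary_sum b m j <= / 3 ^ m / 2.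
Proof.
  revert m. induction j as [| j IH]; intros m; simpl.
  - pose proof (inv_pow3_pos m). lra.
  - specialize (IH (S m)). simpl in IH. rewrite Rinv_mult in IH.
    pose proof (inv_pow3_pos m). destruct (b m); rewrite ?Rinv_mult; lra.
Qed.

Lemma ternary_sum_app b m j1 j2 :
  ternary_sum b m (j1 + j2) = ternary_sum b m j1 + ternary_sum b (m + j1) j2.
Proof.
  revert m. induction j1 as [| j1 IH]; intros m; simpl; [rewrite Nat.add_0_r; lra |].
  rewrite IH. replace (S m + j1)%nat with (m + S j1)%nat by lia. lra.
Qed.

Lemma ternary_sum_agree b c m : agree m b c -> ternary_sum b 0 m = ternary_sum c 0 m.
Proof.
  assert (H : forall j k, agree (k + j) b c -> ternary_sum b k j = ternary_sum c k j).
  { induction j as [| j IH]; intros k Hbc; simpl; [reflexivity |].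
    rewrite (Hbc k), IH; [reflexivity | apply (agree_le (k + S j)); [lia | exact Hbc] | lia]. }
  intros Hbc. apply H, Hbc.
Qed.

Lemma ternary_sums_bounded b : bound (fun x => exists n, x = ternary_sum b 0 n).
Proof. exists (/ 3 ^ 0 / 2). intros x [n ->]. apply ternary_sum_le. Qed.

Definition ternary_value (b : cantor) : R :=
  proj1_sig (completeness _ (ternary_sums_bounded b) (ex_intro _ 0 (ex_intro _ 0%nat eq_refl))).

Lemma ternary_value_lub b : is_lub (fun x => exists n, x = ternary_sum b 0 n) (ternary_value b).
Proof. unfold ternary_value. destruct completeness as [l Hl]. exact Hl. Qed.

(* The digits are 0 and 1 in base 3, so the tail after the first difference is too short
   to compensate. *)
Lemma ternary_value_lt (b c : cantor) m : b m = true -> c m = false -> agree m b c ->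
  ternary_value c < ternary_value b.
Proof.
  intros Hb Hc Hbc. set (P := ternary_sum b 0 m).
  assert (HP : ternary_sum c 0 m = P) by (symmetry; apply ternary_sum_agree, Hbc).
  assert (Hlow : P + / 3 ^ S m <= ternary_value b).
  { apply (proj1 (ternary_value_lub b)). exists (m + 1)%nat.
    rewrite ternary_sum_app. simpl. rewrite Hb. unfold P. lra. }
  assert (Hup : ternary_value c <= P + / 3 ^ S m / 2).
  { apply (proj2 (ternary_value_lub c)). intros x [n ->].
    apply Rle_trans with (ternary_sum c 0 (m + S n)).
    - replace (m + S n)%nat with (n + S m)%nat by lia. rewrite ternary_sum_app.
      pose proof (ternary_sum_nonneg c (0 + n) (S m)). lra.
    - pose proof (ternary_sum_le c (S m) n). rewrite ternary_sum_app. simpl in *. rewrite Hc, HP. lra. }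
  pose proof (inv_pow3_pos (S m)). lra.
Qed.

Lemma ternary_value_inj b c : ternary_value b = ternary_value c -> b = c.
Proof.
  intros E. apply NNPP. intros Hbc. destruct (exists_first_diff b c Hbc) as [m [Hm Hagree]].
  destruct (b m) eqn:Ebm, (c m) eqn:Ecm; try congruence.
  - pose proof (ternary_value_lt b c m Ebm Ecm Hagree). lra.
  - pose proof (ternary_value_lt c b m Ecm Ebm (agree_sym _ _ _ Hagree)). lra.
Qed.

Lemma separable_injects_R {X : Type} (d : X -> X -> R) : is_metric d -> separable_metric d ->
  exists iota : X -> R, forall x y, iota x = iota y -> x = y.
Proof.
  intros Hd [s Hs].
  (* bit [<i, m>] of [x] records whether [x] lies in the ball of radius [1 / 2 ^ m]
     around [s i] *)
  set (bits x n := let (i, m) := Cantor.of_nat n in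
    if Rlt_dec (d x (s i)) (/ 2 ^ m) then true else false).
  exists (fun x => ternary_value (bits x)). intros x y E. apply ternary_value_inj in E.
  apply NNPP. intros Hxy. pose proof (metric_pos _ _ Hd x y Hxy) as Hpos.
  destruct (exists_inv_pow2_lt (d x y / 2)) as [m Hm]; [lra |].
  destruct (Hs x (/ 2 ^ m) (inv_pow2_pos m)) as [i Hi].
  assert (Hb : bits x (Cantor.to_nat (i, m)) = bits y (Cantor.to_nat (i, m)))
    by (rewrite E; reflexivity).
  unfold bits in Hb. rewrite Cantor.cancel_of_to in Hb.
  destruct (Rlt_dec (d x (s i)) (/ 2 ^ m)); [| contradiction].
  destruct (Rlt_dec (d y (s i)) (/ 2 ^ m)); [| discriminate].
  pose proof (metric_tri _ _ Hd x (s i) y). rewrite (metric_sym _ _ Hd (s i) y) in *. lra.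
Qed.

Module WellOrdering.
Import ssreflect ssrfun ssrbool eqtype boolp wochoice.

Definition carrier (T : Type) : Type := T.
HB.instance Definition _ (T : Type) := gen_eqMixin (carrier T).

Lemma well_ordering (T : Type) : exists W : T -> T -> Prop,
  (forall x y, W x y \/ W y x) /\ (forall x y, W x y -> W y x -> x = y) /\
  (forall P : T -> Prop, (exists x, P x) -> exists z, P z /\ forall x, P x -> W z x).
Proof.
have [W woW] := well_ordering_principle (carrier T).
have woc : wo_chain W predT by exact: withinW.
exists (fun x y => W x y); split; [|split].
- by move=> x y; have /orP := wo_chainW woc (x:=x) (y:=y) isT isT.
- by move=> x y Wxy Wyx; apply: (wo_chain_antisymmetric woc) => //; rewrite Wxy Wyx.
- move=> P [x Px].
  have [z [[/asboolP Pz lbz] _]] := woW [pred y | `[< P y >]] (ex_intro _ x (asboolT Px)).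
  by exists z; split=> // y Py; apply: lbz; apply/asboolP.
Qed.
End WellOrdering.

Lemma CH_aleph1_order : CH -> exists lt : R -> R -> Prop,
  (forall x y, lt x y \/ x = y \/ lt y x) /\ (forall y, countable_set (fun x => lt x y)).
Proof.
  intros HCH. destruct (WellOrdering.well_ordering R) as [W [Wtot [Wanti Wmin]]].
  set (Wlt x y := W x y /\ x <> y).
  assert (Wtri : forall x y, Wlt x y \/ x = y \/ Wlt y x).
  { intros x y. destruct (classic (x = y)) as [E | E]; [auto |].
    destruct (Wtot x y); [left | right; right]; split; auto. }
  destruct (classic (exists y, ~ countable_set (fun x => Wlt x y))) as [Hex | Hall];
    [| exists Wlt; split; [exact Wtri | intros y; apply NNPP; intros Hy; apply Hall; eauto]].
  (* [m] is the least point with an uncountable initial segment, which CH puts in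
     bijection with R *)
  destruct (Wmin _ Hex) as [m [Hm Hmin]].
  destruct (HCH (fun x => Wlt x m)) as [[f Hf] | [h [Hinj Hsurj]]].
  - exfalso. apply Hm.
    exists (fun x => match excluded_middle_informative (Wlt x m) with
                     | left p => f (exist _ x p) | right _ => 0%nat end).
    intros x y Hx Hy. destruct (excluded_middle_informative (Wlt x m)); [| contradiction].
    destruct (excluded_middle_informative (Wlt y m)); [| contradiction].
    intros E. exact (f_equal (@proj1_sig _ _) (Hf _ _ E)).
  - set (hv a := proj1_sig (h a)).
    assert (Hhv : forall a b, hv a = hv b -> a = b).
    { intros a b E. apply Hinj, eq_sig_hprop; [intros; apply proof_irrelevance | exact E]. }
    exists (fun a b => Wlt (hv a) (hv b)). split.
    + intros a b. destruct (Wtri (hv a) (hv b)) as [H | [H | H]]; auto.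
    + intros b. apply (countable_set_preimage hv (fun x => Wlt x (hv b)) Hhv).
      apply NNPP. intros Hb. destruct (proj2_sig (h b)) as [Hbm Hneq].
      apply Hneq, Wanti; [exact Hbm | exact (Hmin _ Hb)].
Qed.

Lemma CH_aleph1_order_injective {T : Type} (iota : T -> R) : CH ->
  (forall x y, iota x = iota y -> x = y) -> exists lt : T -> T -> Prop,
  (forall x y, lt x y \/ x = y \/ lt y x) /\ (forall y, countable_set (fun x => lt x y)).
Proof.
  intros HCH Hiota. destruct (CH_aleph1_order HCH) as [ltR [Htri Hcount]].
  exists (fun x y => ltR (iota x) (iota y)). split.
  - intros x y. destruct (Htri (iota x) (iota y)) as [H | [H | H]]; auto.
  - intros y. apply (countable_set_preimage iota (fun r => ltR r (iota y)) Hiota), Hcount.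
Qed.

Lemma mul_cancel_l {G : Type} (mul : G -> G -> G) inv e :
  (forall x y z, mul x (mul y z) = mul (mul x y) z) -> (forall x, mul e x = x /\ mul x e = x) ->
  (forall x, mul (inv x) x = e /\ mul x (inv x) = e) ->
  forall a x y, mul a x = mul a y -> x = y.
Proof.
  intros Hassoc Hid Hinv a x y E.
  rewrite <- (proj1 (Hid x)), <- (proj1 (Hid y)), <- (proj1 (Hinv a)), <- !Hassoc, E.
  reflexivity.
Qed.

Lemma uncountable_polish_perfect {G : Type} (mul : G -> G -> G) inv e d :
  polish_group mul inv e d -> uncountable G ->
  forall c rho, 0 < rho -> exists x, x <> c /\ d c x < rho.
Proof.
  intros [Hassoc [Hid [Hinv [Hd [_ [[s Hs] [Hcont _]]]]]]] Hunc c rho Hrho. apply NNPP. intros Hno.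
  assert (Hiso : forall x, d c x < rho -> x = c).
  { intros x Hx. apply NNPP. intros Hne. apply Hno. eauto. }
  (* an isolated point makes every point isolated, so the dense sequence [s] exhausts G *)
  assert (Hdense : forall g, exists n, s n = g).
  { intros g. set (a := mul c (inv g)).
    assert (Eag : mul a g = c) by (unfold a; rewrite <- Hassoc, (proj1 (Hinv g)); apply Hid).
    destruct (Hcont a g rho Hrho) as [delta [Hdelta Hmul]].
    destruct (Hs g delta Hdelta) as [n Hn]. exists n.
    apply (mul_cancel_l mul inv e Hassoc Hid Hinv a).
    rewrite Eag. apply Hiso. rewrite <- Eag at 1. apply Hmul; [| exact Hn].
    rewrite metric_refl by exact Hd. exact Hdelta. }
  apply Hunc.
  exists (fun g => proj1_sig (constructive_indefinite_description _ (Hdense g))).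
  intros x y E.
  rewrite <- (proj2_sig (constructive_indefinite_description _ (Hdense x))), E.
  exact (proj2_sig (constructive_indefinite_description _ (Hdense y))).
Qed.

(** * A Sidon Cantor set *)

Fixpoint prefix_index (n : nat) (a : cantor) : nat :=
  match n with O => O | S n => (2 * prefix_index n a + (if a n then 1 else 0))%nat end.

Lemma prefix_index_lt n a : (prefix_index n a < 2 ^ n)%nat.
Proof. induction n as [| n IH]; simpl; [lia | destruct (a n); lia]. Qed.

Lemma prefix_index_div2 n a : (prefix_index (S n) a / 2 = prefix_index n a)%nat.
Proof.
  symmetry. apply (Nat.div_unique _ 2 _ (if a n then 1%nat else 0%nat)); simpl; destruct (a n); lia.
Qed.

Lemma prefix_index_agree n a b : agree n a b -> prefix_index n a = prefix_index n b.
Proof.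
  induction n as [| n IH]; simpl; intros H; [reflexivity |].
  rewrite IH, (H n); [reflexivity | lia | exact (agree_le _ _ _ _ (Nat.le_succ_diag_r n) H)].
Qed.

Lemma prefix_index_neq a b :
  a <> b -> exists n, forall m, (n <= m)%nat -> prefix_index m a <> prefix_index m b.
Proof.
  intros Hab. destruct (exists_first_diff a b Hab) as [k [Hk _]]. exists (S k).
  intros m L. induction L as [| m L IH].
  - simpl. destruct (a k), (b k); congruence || lia.
  - intros E. apply IH. rewrite <- (prefix_index_div2 m a), <- (prefix_index_div2 m b), E. reflexivity.
Qed.

Lemma list_uniform_radius {A : Type} (Q : A -> R -> Prop) (l : list A) :
  (forall a r r', 0 < r' <= r -> Q a r -> Q a r') ->
  (forall a, In a l -> exists r, 0 < r /\ Q a r) ->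
  exists r, 0 < r /\ forall a, In a l -> Q a r.
Proof.
  intros Hmono. induction l as [| a l IH]; intros Hl.
  - exists 1. split; [lra | intros _ []].
  - destruct IH as [r1 [Hr1 H1]]; [intros b Hb; apply Hl; right; exact Hb |].
    destruct (Hl a (or_introl eq_refl)) as [r2 [Hr2 H2]].
    assert (Hmin : 0 < Rmin r1 r2) by (apply Rmin_glb_lt; assumption).
    pose proof (Rmin_l r1 r2). pose proof (Rmin_r r1 r2).
    exists (Rmin r1 r2). split; [exact Hmin |]. intros b [-> | Hb].
    + apply (Hmono b r2); [lra | exact H2].
    + apply (Hmono b r1); [lra | exact (H1 b Hb)].
Qed.

Definition dist4 {T : Type} (a b c d : T) : Prop :=
  a <> b /\ a <> c /\ a <> d /\ b <> c /\ b <> d /\ c <> d.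

Definition injective_on {I T : Type} (P : I -> Prop) (p : I -> T) : Prop :=
  forall i j, P i -> P j -> i <> j -> p i <> p j.

Definition sidon {I G : Type} (mul : G -> G -> G) (P : I -> Prop) (p : I -> G) : Prop :=
  forall s1 s2 s3 s4, P s1 -> P s2 -> P s3 -> P s4 -> dist4 s1 s2 s3 s4 ->
    mul (p s1) (p s2) <> mul (p s3) (p s4).

Section SidonCantorSet.
Variables (G : Type) (mul : G -> G -> G) (inv : G -> G) (e : G) (d : G -> G -> R).
Hypothesis Hassoc : forall x y z, mul x (mul y z) = mul (mul x y) z.
Hypothesis Hid : forall x, mul e x = x /\ mul x e = x.
Hypothesis Hinv : forall x, mul (inv x) x = e /\ mul x (inv x) = e.
Hypothesis Hcomm : forall x y, mul x y = mul y x.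
Hypothesis Hd : is_metric d.
Hypothesis Hcompl : complete_metric d.
Hypothesis Hmul_cont : forall x y eps, 0 < eps -> exists delta, 0 < delta /\
  forall x' y', d x x' < delta -> d y y' < delta -> d (mul x y) (mul x' y') < eps.
Hypothesis Hperfect : forall c rho, 0 < rho -> exists x, x <> c /\ d c x < rho.

Lemma perfect_ball_avoids_list (c : G) (l : list G) rho : 0 < rho ->
  exists x, x <> c /\ d c x < rho /\ ~ In x l.
Proof.
  revert rho. induction l as [| a l IH]; intros rho Hrho.
  - destruct (Hperfect c rho Hrho) as [x [Hxc Hx]]. exists x. auto.
  - destruct (classic (a = c)) as [-> | Hac].
    + destruct (IH rho Hrho) as [x [Hxc [Hx Hxl]]].
      exists x. split; [exact Hxc | split; [exact Hx |]]. intros [E | E]; auto.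
    + pose proof (metric_pos _ _ Hd c a (not_eq_sym Hac)).
      destruct (IH (Rmin rho (d c a))) as [x [Hxc [Hx Hxl]]]; [apply Rmin_glb_lt; lra |].
      pose proof (Rmin_l rho (d c a)). pose proof (Rmin_r rho (d c a)).
      exists x. split; [exact Hxc | split; [lra |]]. intros [-> | E]; [lra | auto].
Qed.

Lemma sidon_points_near (q : nat -> G) r : 0 < r -> forall k, exists p : nat -> G,
  (forall j, (j < k)%nat -> d (q j) (p j) < r) /\
  injective_on (fun j => j < k)%nat p /\ sidon mul (fun j => j < k)%nat p.
Proof.
  intros Hr. induction k as [| k IH].
  - exists q. unfold injective_on, sidon. split; [| split]; intros; lia.
  - destruct IH as [p [Hnear [Hinj Hsid]]].
    set (ks := seq 0 k).
    set (forbidden := map p ks ++ flat_map (fun a => flat_map (fun b =>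
      map (fun b' => mul (mul (p b) (p b')) (inv (p a))) ks) ks) ks).
    destruct (perfect_ball_avoids_list (q k) forbidden r Hr) as [x [_ [Hx Hxf]]].
    assert (Hks : forall a, (a < k)%nat -> In a ks) by (intros a Ha; apply in_seq; lia).
    assert (Hnew1 : forall a, (a < k)%nat -> x <> p a).
    { intros a Ha ->. apply Hxf, in_or_app. left. apply in_map, Hks, Ha. }
    assert (Hnew2 : forall a b b', (a < k)%nat -> (b < k)%nat -> (b' < k)%nat ->
      mul x (p a) <> mul (p b) (p b')).
    { intros a b b' Ha Hb Hb' E. apply Hxf, in_or_app. right.
      apply in_flat_map. exists a. split; [auto |]. apply in_flat_map. exists b. split; [auto |].
      apply in_map_iff. exists b'. split; [| auto].
      rewrite <- E, <- Hassoc, (proj2 (Hinv (p a))). apply Hid. }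
    exists (fun j => if Nat.eqb j k then x else p j). split; [| split].
    + intros j Hj. destruct (Nat.eqb_spec j k) as [-> | Hjk]; [exact Hx | apply Hnear; lia].
    + intros i j Hi Hj Hij.
      destruct (Nat.eqb_spec i k); destruct (Nat.eqb_spec j k); subst; try lia.
      * apply Hnew1. lia.
      * apply not_eq_sym, Hnew1. lia.
      * apply Hinj; lia.
    + intros s1 s2 s3 s4 H1 H2 H3 H4 [D1 [D2 [D3 [D4 [D5 D6]]]]].
      destruct (Nat.eqb_spec s1 k); destruct (Nat.eqb_spec s2 k);
        destruct (Nat.eqb_spec s3 k); destruct (Nat.eqb_spec s4 k); subst; try lia.
      * apply Hnew2; lia.
      * rewrite Hcomm. apply Hnew2; lia.
      * apply not_eq_sym, Hnew2; lia.
      * rewrite (Hcomm (p s3)). apply not_eq_sym, Hnew2; lia.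
      * apply Hsid; try lia. repeat split; assumption.
Qed.

Definition balls_disjoint (M : nat) (c : nat -> G) (r : R) : Prop :=
  forall i j, (i < M)%nat -> (j < M)%nat -> i <> j ->
    forall x y, d (c i) x <= r -> d (c j) y <= r -> x <> y.

Definition balls_sidon (M : nat) (c : nat -> G) (r : R) : Prop :=
  forall s1 s2 s3 s4, (s1 < M)%nat -> (s2 < M)%nat -> (s3 < M)%nat -> (s4 < M)%nat ->
    dist4 s1 s2 s3 s4 -> forall x1 x2 x3 x4, d (c s1) x1 <= r -> d (c s2) x2 <= r ->
    d (c s3) x3 <= r -> d (c s4) x4 <= r -> mul x1 x2 <> mul x3 x4.

Lemma in_seq_lt M i : In i (seq 0 M) <-> (i < M)%nat.
Proof. rewrite in_seq. lia. Qed.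

Lemma balls_disjoint_radius M (p : nat -> G) :
  injective_on (fun j => j < M)%nat p -> exists r, 0 < r /\ balls_disjoint M p r.
Proof.
  intros Hinj.
  destruct (list_uniform_radius (fun ij r => fst ij <> snd ij -> forall x y,
      d (p (fst ij)) x <= r -> d (p (snd ij)) y <= r -> x <> y) (list_prod (seq 0 M) (seq 0 M)))
    as [r [Hr Hball]].
  - intros ij r r' Hr' H Hij x y Hx Hy. apply H; [exact Hij | lra | lra].
  - intros [i j] Hij. apply in_prod_iff in Hij. rewrite !in_seq_lt in Hij. simpl.
    destruct (Nat.eq_dec i j) as [E | E]; [exists 1; split; [lra | contradiction] |].
    pose proof (metric_pos _ _ Hd _ _ (Hinj i j (proj1 Hij) (proj2 Hij) E)).
    exists (d (p i) (p j) / 3). split; [lra |]. intros _ x y Hx Hy ->.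
    pose proof (metric_tri _ _ Hd (p i) y (p j)). rewrite (metric_sym _ _ Hd y (p j)) in *. lra.
  - exists r. split; [exact Hr |]. intros i j Hi Hj.
    apply (Hball (i, j)), in_prod_iff. rewrite !in_seq_lt. auto.
Qed.

Lemma balls_sidon_radius M (p : nat -> G) :
  sidon mul (fun j => j < M)%nat p -> exists r, 0 < r /\ balls_sidon M p r.
Proof.
  intros Hsid. set (l := list_prod (seq 0 M) (seq 0 M)).
  destruct (list_uniform_radius (fun s r => let '((s1, s2), (s3, s4)) := s in
      dist4 s1 s2 s3 s4 -> forall x1 x2 x3 x4, d (p s1) x1 <= r -> d (p s2) x2 <= r ->
      d (p s3) x3 <= r -> d (p s4) x4 <= r -> mul x1 x2 <> mul x3 x4) (list_prod l l))
    as [r [Hr Hball]].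
  - intros [[s1 s2] [s3 s4]] r r' Hr' H D x1 x2 x3 x4 ? ? ? ?. apply H; [exact D | lra..].
  - intros [[s1 s2] [s3 s4]] Hs. unfold l in Hs. rewrite !in_prod_iff, !in_seq_lt in Hs.
    destruct (classic (dist4 s1 s2 s3 s4)) as [D | D];
      [| exists 1; split; [lra | contradiction]].
    set (y12 := mul (p s1) (p s2)). set (y34 := mul (p s3) (p s4)).
    assert (Hgap : 0 < d y12 y34) by (apply (metric_pos _ _ Hd), Hsid; tauto).
    destruct (Hmul_cont (p s1) (p s2) (d y12 y34 / 2)) as [e1 [He1 H12]]; [lra |].
    destruct (Hmul_cont (p s3) (p s4) (d y12 y34 / 2)) as [e2 [He2 H34]]; [lra |].
    assert (Hmin : 0 < Rmin e1 e2) by (apply Rmin_glb_lt; assumption).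
    pose proof (Rmin_l e1 e2). pose proof (Rmin_r e1 e2).
    exists (Rmin e1 e2 / 2). split; [lra |].
    intros _ x1 x2 x3 x4 ? ? ? ? E.
    assert (A12 : d y12 (mul x1 x2) < d y12 y34 / 2) by (apply H12; lra).
    assert (A34 : d y34 (mul x3 x4) < d y12 y34 / 2) by (apply H34; lra).
    rewrite E in A12. pose proof (metric_tri _ _ Hd y12 (mul x3 x4) y34).
    rewrite (metric_sym _ _ Hd (mul x3 x4) y34) in *. lra.
  - exists r. split; [exact Hr |]. intros s1 s2 s3 s4 H1 H2 H3 H4.
    apply (Hball ((s1, s2), (s3, s4))). unfold l. rewrite !in_prod_iff, !in_seq_lt. auto.
Qed.

Lemma sidon_balls_near (q : nat -> G) r M : 0 < r ->
  exists p r', 0 < r' /\ r' <= r /\ (forall j, (j < M)%nat -> d (q j) (p j) < r) /\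
    balls_disjoint M p r' /\ balls_sidon M p r'.
Proof.
  intros Hr. destruct (sidon_points_near q r Hr M) as [p [Hnear [Hinj Hsid]]].
  destruct (balls_disjoint_radius M p Hinj) as [r1 [Hr1 H1]].
  destruct (balls_sidon_radius M p Hsid) as [r2 [Hr2 H2]].
  set (r' := Rmin (Rmin r1 r2) r).
  pose proof (Rmin_l (Rmin r1 r2) r). pose proof (Rmin_r (Rmin r1 r2) r).
  pose proof (Rmin_l r1 r2). pose proof (Rmin_r r1 r2).
  assert (0 < r') by (repeat apply Rmin_glb_lt; assumption).
  exists p, r'. repeat split; [assumption.. | |].
  - intros i j Hi Hj Hij x y Hx Hy. apply (H1 i j); unfold r' in *; auto; lra.
  - intros s1 s2 s3 s4 ? ? ? ? D x1 x2 x3 x4 ? ? ? ?. apply (H2 s1 s2 s3 s4); unfold r' in *; auto; lra.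
Qed.

Lemma next_level_ex n (cr : (nat -> G) * R) : exists q : (nat -> G) * R,
  0 < snd cr -> 0 < snd q /\ snd q <= snd cr / 2 /\
  (forall j, (j < 2 ^ S n)%nat -> d (fst cr (j / 2)%nat) (fst q j) < snd cr / 2) /\
  balls_disjoint (2 ^ S n) (fst q) (snd q) /\ balls_sidon (2 ^ S n) (fst q) (snd q).
Proof.
  destruct cr as [c r]. destruct (Rlt_dec 0 r) as [Hr | Hr]; [| exists (c, r); simpl; lra].
  destruct (sidon_balls_near (fun j => c (j / 2)%nat) (r / 2) (2 ^ S n)) as [c' [r' H]]; [lra |].
  exists (c', r'). auto.
Qed.

Definition next_level n cr :=
  proj1_sig (constructive_indefinite_description _ (next_level_ex n cr)).

(* Level [n] consists of [2 ^ n] closed balls; ball [j] of level [n + 1] lies inside ball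
   [j / 2] of level [n]. *)
Fixpoint level (n : nat) : (nat -> G) * R :=
  match n with O => (fun _ => e, 1) | S n => next_level n (level n) end.

Definition centre n := fst (level n).
Definition radius n := snd (level n).

Lemma radius_pos n : 0 < radius n.
Proof.
  induction n as [| n IH]; [unfold radius; simpl; lra |].
  exact (proj1 (proj2_sig (constructive_indefinite_description _ (next_level_ex n (level n))) IH)).
Qed.

Lemma level_spec n : radius (S n) <= radius n / 2 /\
  (forall j, (j < 2 ^ S n)%nat -> d (centre n (j / 2)%nat) (centre (S n) j) < radius n / 2) /\
  balls_disjoint (2 ^ S n) (centre (S n)) (radius (S n)) /\
  balls_sidon (2 ^ S n) (centre (S n)) (radius (S n)).
Proof.
  exact (proj2 (proj2_sig (constructive_indefinite_description _ (next_level_ex n (level n)))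
    (radius_pos n))).
Qed.

Lemma radius_le n : radius n <= / 2 ^ n.
Proof.
  induction n as [| n IH]; [unfold radius; simpl; lra |].
  destruct (level_spec n) as [H _]. simpl pow. rewrite Rinv_mult. lra.
Qed.

Definition approx (n : nat) (a : cantor) : G := centre n (prefix_index n a).

Lemma approx_chain a n m : (n <= m)%nat -> d (approx n a) (approx m a) <= radius n - radius m.
Proof.
  intros L. induction L as [| m L IH].
  - rewrite metric_refl by exact Hd. lra.
  - destruct (level_spec m) as [H1 [H2 _]].
    pose proof (H2 _ (prefix_index_lt (S m) a)) as H. rewrite prefix_index_div2 in H.
    pose proof (metric_tri _ _ Hd (approx n a) (approx m a) (approx (S m) a)). unfold approx in *. lra.
Qed.

Lemma approx_cauchy a : cauchy_seq d (fun n => approx n a).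
Proof.
  intros eps Heps. destruct (exists_inv_pow2_lt (eps / 2)) as [N HN]; [lra |]. exists N.
  intros m n Hm Hn. pose proof (approx_chain a N m Hm). pose proof (approx_chain a N n Hn).
  pose proof (metric_tri _ _ Hd (approx m a) (approx N a) (approx n a)).
  rewrite (metric_sym _ _ Hd (approx m a) (approx N a)) in *.
  pose proof (radius_le N). pose proof (radius_pos m). pose proof (radius_pos n). lra.
Qed.

Definition embedding (a : cantor) : G :=
  proj1_sig (constructive_indefinite_description _ (Hcompl _ (approx_cauchy a))).

Lemma embedding_close n a : d (approx n a) (embedding a) <= radius n.
Proof.
  unfold embedding. destruct (constructive_indefinite_description _ _) as [l Hl]. simpl.
  apply Rnot_lt_le. intros Hlt.
  destruct (Hl (d (approx n a) l - radius n)) as [N HN]; [lra |].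
  specialize (HN (max n N) ltac:(lia)). pose proof (approx_chain a n (max n N) ltac:(lia)).
  pose proof (metric_tri _ _ Hd (approx n a) (approx (max n N) a) l).
  pose proof (radius_pos (max n N)). lra.
Qed.

Lemma embedding_continuous : continuous_map dcantor d embedding.
Proof.
  intros a eps Heps. destruct (exists_inv_pow2_lt (eps / 2)) as [n Hn]; [lra |].
  exists (/ 2 ^ n). split; [apply inv_pow2_pos |]. intros b Hab.
  assert (E : approx n a = approx n b).
  { unfold approx. rewrite (prefix_index_agree n a b); [reflexivity |].
    exact (agree_le _ _ _ _ (Nat.le_succ_diag_r n) (dcantor_lt_agree a b n Hab)). }
  pose proof (embedding_close n a). pose proof (embedding_close n b). rewrite <- E in *.
  pose proof (metric_tri _ _ Hd (embedding a) (approx n a) (embedding b)).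
  rewrite (metric_sym _ _ Hd (embedding a) (approx n a)) in *. pose proof (radius_le n). lra.
Qed.

Lemma embedding_inj a b : embedding a = embedding b -> a = b.
Proof.
  intros E. apply NNPP. intros Hab. destruct (prefix_index_neq a b Hab) as [n Hn].
  destruct (level_spec n) as [_ [_ [Hdisj _]]].
  apply (Hdisj (prefix_index (S n) a) (prefix_index (S n) b) (prefix_index_lt _ _)
    (prefix_index_lt _ _) (Hn (S n) (Nat.le_succ_diag_r n)) (embedding a) (embedding b));
    [apply embedding_close | apply embedding_close | exact E].
Qed.

Lemma embedding_sidon : sidon mul (fun _ => True) embedding.
Proof.
  intros a1 a2 a3 a4 _ _ _ _ [D1 [D2 [D3 [D4 [D5 D6]]]]].
  destruct (prefix_index_neq _ _ D1) as [n1 N1]. destruct (prefix_index_neq _ _ D2) as [n2 N2].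
  destruct (prefix_index_neq _ _ D3) as [n3 N3]. destruct (prefix_index_neq _ _ D4) as [n4 N4].
  destruct (prefix_index_neq _ _ D5) as [n5 N5]. destruct (prefix_index_neq _ _ D6) as [n6 N6].
  set (n := max n1 (max n2 (max n3 (max n4 (max n5 n6))))).
  destruct (level_spec n) as [_ [_ [_ Hsid]]].
  apply (Hsid (prefix_index (S n) a1) (prefix_index (S n) a2) (prefix_index (S n) a3)
    (prefix_index (S n) a4)); try apply prefix_index_lt; try apply embedding_close.
  repeat split; [apply N1 | apply N2 | apply N3 | apply N4 | apply N5 | apply N6]; unfold n; lia.
Qed.

Theorem exists_sidon_cantor_embedding : exists F : cantor -> G,
  continuous_map dcantor d F /\ (forall a b, F a = F b -> a = b) /\ sidon mul (fun _ => True) F.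
Proof.
  exists embedding.
  split; [exact embedding_continuous | split; [exact embedding_inj | exact embedding_sidon]].
Qed.

End SidonCantorSet.

(** * Splitting the group *)

Section SplitSet.
Variables (G : Type) (mul : G -> G -> G) (inv : G -> G) (e : G) (d : G -> G -> R).
Hypothesis Hassoc : forall x y z, mul x (mul y z) = mul (mul x y) z.
Hypothesis Hid : forall x, mul e x = x /\ mul x e = x.
Hypothesis Hinv : forall x, mul (inv x) x = e /\ mul x (inv x) = e.
Hypothesis Hcomm : forall x y, mul x y = mul y x.
Variable F : cantor -> G.
Hypothesis HFcont : continuous_map dcantor d F.
Hypothesis HFinj : forall a b, F a = F b -> a = b.
Hypothesis HFsidon : sidon mul (fun _ => True) F.
Variable lt : G -> G -> Prop.
Hypothesis Hlt_tri : forall x y, lt x y \/ x = y \/ lt y x.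
Hypothesis Hlt_countable : forall y, countable_set (fun x => lt x y).

Lemma translate2_iff g h X y : translate2 mul g h X y <-> X (mul (inv (mul g h)) y).
Proof.
  assert (Htr : forall x, mul (mul g x) h = mul (mul g h) x).
  { intros x. rewrite <- !Hassoc. f_equal. apply Hcomm. }
  split.
  - intros [x [Xx ->]]. rewrite Htr, Hassoc, (proj1 (Hinv _)), (proj1 (Hid x)). exact Xx.
  - intros Xy. exists (mul (inv (mul g h)) y). split; [exact Xy |].
    rewrite Htr, Hassoc, (proj2 (Hinv _)), (proj1 (Hid y)). reflexivity.
Qed.

Definition half (v : bool) (a : cantor) : G := F (cons_bit v a).

(* From [w x1 = beta y1] and [w x2 = beta y2] we get [x1 y2 = x2 y1], a Sidon quadruple
   unless [x1 = x2]. *)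
Lemma halves_meet_once v1 v2 w beta : v1 <> v2 ->
  subsingleton (fun a => exists b, mul w (half v1 a) = mul beta (half v2 b)).
Proof.
  intros Hv a1 a2 [b1 E1] [b2 E2].
  assert (Ecross : mul (half v1 a1) (half v2 b2) = mul (half v1 a2) (half v2 b1)).
  { apply (mul_cancel_l mul inv e Hassoc Hid Hinv w). rewrite !Hassoc, E1, E2, <- !Hassoc. f_equal. apply Hcomm. }
  destruct (classic (b1 = b2)) as [<- | Hb].
  - apply (cons_bit_inj v1), HFinj. fold (half v1 a1) (half v1 a2).
    apply (mul_cancel_l mul inv e Hassoc Hid Hinv w). rewrite E1, E2. reflexivity.
  - apply NNPP. intros Ha.
    apply (HFsidon (cons_bit v1 a1) (cons_bit v2 b2) (cons_bit v1 a2) (cons_bit v2 b1));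
      [trivial.. | | exact Ecross].
    repeat split; try (apply cons_bit_neq; congruence);
      intros E; apply cons_bit_inj in E; congruence.
Qed.

Lemma half_naively_haar_meager v (A : G -> Prop) :
  (forall w, meager dcantor (fun k => A (mul w (half v k)))) -> naively_haar_meager mul d A.
Proof.
  intros HA. exists cantor, dcantor, (half v).
  split; [exact dcantor_metric | split; [exact cantor_compact | split]].
  - exists (fun _ => false). trivial.
  - split; [apply continuous_cons_bit, HFcont |]. intros g h.
    destruct (HA (inv (mul g h))) as [An [Hnd Hcov]]. exists An. split; [exact Hnd |].
    intros k Hk. apply Hcov, translate2_iff, Hk.
Qed.

Definition split_set (y : G) : Prop :=
  exists beta b, y = mul beta (half true b) /\
    forall alpha, (lt alpha beta \/ alpha = beta) -> forall a, y <> mul alpha (half false a).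

Lemma split_set_naively_haar_meager : naively_haar_meager mul d split_set.
Proof.
  apply (half_naively_haar_meager false). intros w.
  apply (meager_countable_union_subsingletons (fun beta => lt beta w)
    (fun beta k => exists b, mul w (half false k) = mul beta (half true b))).
  - apply Hlt_countable.
  - intros beta. apply halves_meet_once. discriminate.
  - intros k [beta [b [E Hb]]]. exists beta. split; [| eauto].
    destruct (Hlt_tri beta w) as [H | [H | H]]; [exact H | |];
      exfalso; apply (Hb w) with k; auto.
Qed.

Lemma split_set_compl_naively_haar_meager : naively_haar_meager mul d (fun y => ~ split_set y).
Proof.
  apply (half_naively_haar_meager true). intros w.
  apply (meager_countable_union_subsingletons (fun alpha => lt alpha w \/ alpha = w)
    (fun alpha k => exists a, mul w (half true k) = mul alpha (half false a))).
  - apply countable_set_add, Hlt_countable.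
  - intros alpha. apply halves_meet_once. discriminate.
  - intros k Hk. apply NNPP. intros Hno. apply Hk. exists w, k. split; [reflexivity |].
    intros alpha Halpha a E. apply Hno. eauto.
Qed.

Theorem exists_naively_haar_meager_split : exists X : G -> Prop,
  naively_haar_meager mul d X /\ naively_haar_meager mul d (fun y => ~ X y).
Proof.
  exists split_set.
  split; [exact split_set_naively_haar_meager | exact split_set_compl_naively_haar_meager].
Qed.

End SplitSet.

Lemma full_not_naively_haar_meager {G : Type} (mul : G -> G -> G) e d (A : G -> Prop) :
  (forall x, mul e x = x /\ mul x e = x) -> (forall y, A y) -> ~ naively_haar_meager mul d A.
Proof.
  intros Hid HA [K [dK [f [HdK [Hc [Hne [_ Hmeager]]]]]]].
  apply (compact_not_meager K dK HdK Hc Hne).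
  destruct (Hmeager e e) as [An [Hnd Hcov]]. exists An. split; [exact Hnd |].
  intros k _. apply Hcov. exists (f k). split; [apply HA |].
  rewrite (proj1 (Hid _)), (proj2 (Hid _)). reflexivity.
Qed.

Theorem proposition3p6 :
  CH ->
  forall (G : Type) (mul : G -> G -> G) (inv : G -> G) (e : G)
         (d : G -> G -> R),
    polish_group mul inv e d -> abelian mul -> uncountable G ->
    (exists X : G -> Prop,
        naively_haar_meager mul d X /\
        naively_haar_meager mul d (fun y => ~ X y)) /\
    ~ (forall A B : G -> Prop,
          naively_haar_meager mul d A -> naively_haar_meager mul d B ->
          naively_haar_meager mul d (fun y => A y \/ B y)).
Proof.
  intros HCH G mul inv e d HP Hab Hunc.
  pose proof (uncountable_polish_perfect mul inv e d HP Hunc) as Hperfect.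
  destruct HP as [Hassoc [Hid [Hinv [Hd [Hcompl [Hsep [Hmul_cont _]]]]]]].
  destruct (exists_sidon_cantor_embedding G mul inv e d Hassoc Hid Hinv Hab Hd Hcompl Hmul_cont
    Hperfect) as [F [HFcont [HFinj HFsidon]]].
  destruct (separable_injects_R d Hd Hsep) as [iota Hiota].
  destruct (CH_aleph1_order_injective iota HCH Hiota) as [lt [Hlt_tri Hlt_countable]].
  destruct (exists_naively_haar_meager_split G mul inv e d Hassoc Hid Hinv Hab F HFcont HFinj
    HFsidon lt Hlt_tri Hlt_countable) as [X [HX HXc]].
  split; [eauto |]. intros Hunion.
  exact (full_not_naively_haar_meager mul e d _ Hid (fun y => classic (X y)) (Hunion _ _ HX HXc)).
Qed.
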